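(* Let $A$ be a group and $H$ a subgroup of $A$ such that there exists an $H$-filtration of $A$. Let $B$ be an ERF group, $K$ a central subgroup of $B$, and $\phi: H \to K$ an isomorphism. Then there exist an $H$-filtration of $A$ and a $K$-filtration of $B$ which are $(H, K, \phi)$-compatible.
   Context: A filtration of a group $A$ is a family $\{A_\lambda\}_{\lambda\in\Lambda}$ of normal subgroups of finite index with $\bigcap A_\lambda=\{e\}$; for a subgroup $H$, it is an $H$-filtration if $\bigcap_\lambda HA_\lambda = H$. Given a $K$-filtration $\{B_\lambda\}_{\lambda\in\Lambda}$ of $B$ indexed by the same set, the two filtrations are $(H,K,\phi)$-compatible if for each $\lambda$ the map $hA_\lambda\mapsto\phi(h)B_\lambda$ is well defined and is an isomorphism $HA_\lambda/A_\lambda\to KB_\lambda/B_\lambda$. A subgroup is profinitely closed if it equals the intersection of all finite-index subgroups containing it; a group is ERF (extended residually finite) if all its subgroups are profinitely closed. *)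

From Stdlib Require Import List.

Record Grp := {
  gcar :> Type;
  gmul : gcar -> gcar -> gcar;
  gone : gcar;
  ginv : gcar -> gcar;
  gmulA : forall x y z, gmul x (gmul y z) = gmul (gmul x y) z;
  gmul1l : forall x, gmul gone x = x;
  gmul1r : forall x, gmul x gone = x;
  gmulVl : forall x, gmul (ginv x) x = gone;
  gmulVr : forall x, gmul x (ginv x) = gone
}.

Arguments gmul {g}.
Arguments gone {g}.
Arguments ginv {g}.

Section Defs.
Variable G : Grp.

Definition subgroup (S : G -> Prop) : Prop :=
  S gone /\ (forall x y, S x -> S y -> S (gmul x y)) /\ (forall x, S x -> S (ginv x)).

Definition normal (N : G -> Prop) : Prop :=
  subgroup N /\ forall g x, N x -> N (gmul (ginv g) (gmul x g)).

Definition finite_index (S : G -> Prop) : Prop :=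
  subgroup S /\ exists reps : list G, forall a, exists g, In g reps /\ S (gmul (ginv g) a).

Definition prodset (H N : G -> Prop) : G -> Prop :=
  fun x => exists h n, H h /\ N n /\ x = gmul h n.

Definition lcoset (g : G) (N : G -> Prop) : G -> Prop :=
  fun x => exists n, N n /\ x = gmul g n.

Definition same_set (X Y : G -> Prop) : Prop := forall x, X x <-> Y x.

Definition filtration (Lam : Type) (N : Lam -> G -> Prop) : Prop :=
  (forall l, normal (N l) /\ finite_index (N l)) /\
  (forall x, (forall l, N l x) -> x = gone).

Definition H_filtration (H : G -> Prop) (Lam : Type) (N : Lam -> G -> Prop) : Prop :=
  @filtration Lam N /\ (forall x, (forall l, prodset H (N l) x) <-> H x).

Definition central (K : G -> Prop) : Prop :=
  subgroup K /\ forall k b, K k -> gmul k b = gmul b k.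

Definition profinitely_closed (S : G -> Prop) : Prop :=
  forall x, (forall F, finite_index F -> (forall s, S s -> F s) -> F x) -> S x.

Definition ERF : Prop := forall S, subgroup S -> profinitely_closed S.

End Defs.

Arguments subgroup {G}.
Arguments normal {G}.
Arguments finite_index {G}.
Arguments prodset {G}.
Arguments lcoset {G}.
Arguments same_set {G}.
Arguments filtration {G Lam}.
Arguments H_filtration {G} H {Lam}.
Arguments central {G}.
Arguments profinitely_closed {G}.

(* phi : H -> K is a group isomorphism (phi is a function on the ambient
   carrier, only its restriction to H matters). *)
Definition group_iso_on {A B : Grp} (H : A -> Prop) (K : B -> Prop) (phi : A -> B) : Prop :=
  (forall h, H h -> K (phi h)) /\
  (forall h h', H h -> H h' -> phi (gmul h h') = gmul (phi h) (phi h')) /\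
  (forall h h', H h -> H h' -> phi h = phi h' -> h = h') /\
  (forall k, K k -> exists h, H h /\ phi h = k).

(* (H,K,phi)-compatibility: for every l, the map h A_l |-> phi(h) B_l on
   H A_l / A_l is well defined and is a group isomorphism onto K B_l / B_l.
   Elements of H A_l / A_l are cosets x A_l with x in H A_l, i.e. cosets
   h A_l with h in H; cosets are compared as sets. *)
Definition compatible {A B : Grp} (H : A -> Prop) (K : B -> Prop) (phi : A -> B)
  {Lam : Type} (NA : Lam -> A -> Prop) (NB : Lam -> B -> Prop) : Prop :=
  forall l,
    (forall h h', H h -> H h' ->
       same_set (lcoset h (NA l)) (lcoset h' (NA l)) ->
       same_set (lcoset (phi h) (NB l)) (lcoset (phi h') (NB l))) /\
    (* multiplicative: image of (h A_l)(h' A_l) = hh' A_l is (phi h B_l)(phi h' B_l) = phi h phi h' B_l *)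
    (forall h h', H h -> H h' ->
       same_set (lcoset (phi (gmul h h')) (NB l)) (lcoset (gmul (phi h) (phi h')) (NB l))) /\
    (forall h h', H h -> H h' ->
       same_set (lcoset (phi h) (NB l)) (lcoset (phi h') (NB l)) ->
       same_set (lcoset h (NA l)) (lcoset h' (NA l))) /\
    (forall y, prodset K (NB l) y ->
       exists h, H h /\ same_set (lcoset y (NB l)) (lcoset (phi h) (NB l))).

(* If phi(H /\ M) = K /\ N for normal finite-index subgroups M of A and N of B, then
   h M |-> phi(h) N is a well-defined injection H M / M -> K N / N, onto since phi is onto K.
   For every term M of the given filtration (and for A itself) such an N exists: phi(H /\ M)
   has finite index in K and is normal in B because K is central, so by ERF it is the trace
   on K of a finite-index subgroup, whose normal core still contains it; ERF also lets N
   keep any given b outside K N when b is outside K. Indexing by all triples (M, b, N), the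
   N's then form a K-filtration of B. *)

From Stdlib Require Import List Classical.

Section GroupLaws.
Context {G : Grp}.
Implicit Types x y z : G.

Lemma mulKg x y : gmul (ginv x) (gmul x y) = y.
Proof. rewrite gmulA, gmulVl, gmul1l. reflexivity. Qed.

Lemma mulKVg x y : gmul x (gmul (ginv x) y) = y.
Proof. rewrite gmulA, gmulVr, gmul1l. reflexivity. Qed.

Lemma mulgI x y z : gmul x y = gmul x z -> y = z.
Proof. intros E. rewrite <- (mulKg x y), E, mulKg. reflexivity. Qed.

Lemma invg_uniq x y : gmul x y = gone -> ginv x = y.
Proof. intros E. rewrite <- (mulKg x y), E, gmul1r. reflexivity. Qed.

Lemma invMg x y : ginv (gmul x y) = gmul (ginv y) (ginv x).
Proof. apply invg_uniq. rewrite <- gmulA, mulKVg, gmulVr. reflexivity. Qed.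

Lemma invgK x : ginv (ginv x) = x.
Proof. apply invg_uniq, gmulVl. Qed.

Lemma invg1 : ginv (@gone G) = gone.
Proof. apply invg_uniq, gmul1l. Qed.

End GroupLaws.

Ltac gsimpl :=
  repeat progress rewrite ?invMg, ?invgK, ?invg1, ?gmul1l, ?gmul1r, ?gmulVl, ?gmulVr,
    <- ?gmulA, ?mulKg, ?mulKVg.

Section Subgroups.
Context {G : Grp}.
Implicit Types (x y g r : G) (S T F N : G -> Prop).

Lemma group1 {S} : subgroup S -> S gone.
Proof. intros [? _]; assumption. Qed.

Lemma groupM {S x y} : subgroup S -> S x -> S y -> S (gmul x y).
Proof. intros [_ [? _]]; auto. Qed.

Lemma groupV {S x} : subgroup S -> S x -> S (ginv x).
Proof. intros [_ [_ ?]]; auto. Qed.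

Lemma group_leftdiv {S r x y} :
  subgroup S -> S (gmul (ginv r) x) -> S (gmul (ginv r) y) -> S (gmul (ginv x) y).
Proof.
  intros subS Sx Sy.
  replace (gmul (ginv x) y) with (gmul (ginv (gmul (ginv r) x)) (gmul (ginv r) y))
    by (gsimpl; reflexivity).
  exact (groupM subS (groupV subS Sx) Sy).
Qed.

Lemma lcoset_eqP N g g' :
  subgroup N -> same_set (lcoset g N) (lcoset g' N) <-> N (gmul (ginv g) g').
Proof.
  intros subN; split.
  - intros E. destruct (proj2 (E g')) as [n [Nn En]].
    + exists gone. split; [exact (group1 subN) | rewrite gmul1r; reflexivity].
    + rewrite En, mulKg. exact Nn.
  - intros Ngg' x; split; intros [n [Nn ->]].
    + exists (gmul (ginv (gmul (ginv g) g')) n).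
      split; [exact (groupM subN (groupV subN Ngg') Nn) | gsimpl; reflexivity].
    + exists (gmul (gmul (ginv g) g') n).
      split; [exact (groupM subN Ngg' Nn) | gsimpl; reflexivity].
Qed.

Lemma subgroupT : subgroup (fun _ : G => True).
Proof. repeat split. Qed.

Lemma subgroupI {S T} : subgroup S -> subgroup T -> subgroup (fun x => S x /\ T x).
Proof.
  intros subS subT. split; [|split].
  - exact (conj (group1 subS) (group1 subT)).
  - intros x y [Sx Tx] [Sy Ty]. exact (conj (groupM subS Sx Sy) (groupM subT Tx Ty)).
  - intros x [Sx Tx]. exact (conj (groupV subS Sx) (groupV subT Tx)).
Qed.

Lemma subgroup_conj {F} r : subgroup F -> subgroup (fun x => F (gmul (ginv r) (gmul x r))).
Proof.
  intros subF. split; [|split].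
  - rewrite gmul1l, gmulVl. exact (group1 subF).
  - intros x y Fx Fy.
    replace (gmul (ginv r) (gmul (gmul x y) r))
      with (gmul (gmul (ginv r) (gmul x r)) (gmul (ginv r) (gmul y r))) by (gsimpl; reflexivity).
    exact (groupM subF Fx Fy).
  - intros x Fx.
    replace (gmul (ginv r) (gmul (ginv x) r))
      with (ginv (gmul (ginv r) (gmul x r))) by (gsimpl; reflexivity).
    exact (groupV subF Fx).
Qed.

Lemma subgroup_bigcap (l : list G) (Fam : G -> G -> Prop) :
  (forall r, In r l -> subgroup (Fam r)) -> subgroup (fun x => forall r, In r l -> Fam r x).
Proof.
  intros subFam. split; [|split].
  - intros r lr. exact (group1 (subFam r lr)).
  - intros x y Fx Fy r lr. exact (groupM (subFam r lr) (Fx r lr) (Fy r lr)).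
  - intros x Fx r lr. exact (groupV (subFam r lr) (Fx r lr)).
Qed.

Lemma finite_index_sup S T :
  subgroup T -> (forall x, S x -> T x) -> finite_index S -> finite_index T.
Proof.
  intros subT ST [_ [reps cover]]. split; [exact subT|].
  exists reps. intros a. destruct (cover a) as [g [? ?]]. eauto.
Qed.

Lemma finite_indexT : finite_index (fun _ : G => True).
Proof. split; [exact subgroupT|]. exists (gone :: nil). intros a. exists gone. simpl; auto. Qed.

End Subgroups.

Lemma list_witnesses {T U : Type} (P : T -> U -> Prop) (l : list T) :
  exists L : list U, forall t, In t l -> (exists u, P t u) -> exists u, In u L /\ P t u.
Proof.
  induction l as [|a l [L HL]].
  - exists nil. intros t [].
  - destruct (classic (exists u, P a u)) as [[u Pau]|no_witness].
    + exists (u :: L). intros t [<-|lt] Ht.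
      * exists u. simpl; auto.
      * destruct (HL t lt Ht) as [v [? ?]]. exists v. simpl; auto.
    + exists L. intros t [<-|lt] Ht; [contradiction|auto].
Qed.

Section FiniteIndex.
Context {G : Grp}.
Implicit Types (x y g r : G) (S T F N : G -> Prop).

Lemma finite_indexI F1 F2 :
  finite_index F1 -> finite_index F2 -> finite_index (fun x => F1 x /\ F2 x).
Proof.
  intros [subF1 [R1 cover1]] [subF2 [R2 cover2]]. split; [exact (subgroupI subF1 subF2)|].
  destruct (list_witnesses
    (fun (t : G * G) u => F1 (gmul (ginv (fst t)) u) /\ F2 (gmul (ginv (snd t)) u))
    (list_prod R1 R2)) as [L HL].
  exists L. intros a.
  destruct (cover1 a) as [r1 [R1r1 F1a]], (cover2 a) as [r2 [R2r2 F2a]].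
  destruct (HL (r1, r2) (in_prod _ _ _ _ R1r1 R2r2)) as [c [Lc [F1c F2c]]]; [exists a; auto|].
  exists c. split; [exact Lc|].
  exact (conj (group_leftdiv subF1 F1c F1a) (group_leftdiv subF2 F2c F2a)).
Qed.

Lemma finite_index_conj F r :
  finite_index F -> finite_index (fun x => F (gmul (ginv r) (gmul x r))).
Proof.
  intros [subF [R cover]]. split; [exact (subgroup_conj r subF)|].
  exists (map (fun g => gmul r (gmul g (ginv r))) R). intros a.
  destruct (cover (gmul (ginv r) (gmul a r))) as [g [Rg Fg]].
  exists (gmul r (gmul g (ginv r))).
  split; [exact (in_map (fun g => gmul r (gmul g (ginv r))) _ _ Rg)|].
  replace (gmul (ginv r) (gmul (gmul (ginv (gmul r (gmul g (ginv r)))) a) r))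
    with (gmul (ginv g) (gmul (ginv r) (gmul a r))) by (gsimpl; reflexivity).
  exact Fg.
Qed.

Lemma finite_index_bigcap (l : list G) (Fam : G -> G -> Prop) :
  (forall r, In r l -> finite_index (Fam r)) ->
  finite_index (fun x => forall r, In r l -> Fam r x).
Proof.
  induction l as [|a l IH]; intros fiFam.
  - apply (finite_index_sup (fun _ => True)); [| |exact finite_indexT].
    + apply subgroup_bigcap. intros r [].
    + intros x _ r [].
  - apply (finite_index_sup (fun x => Fam a x /\ forall r, In r l -> Fam r x)).
    + apply subgroup_bigcap. intros r lr. apply fiFam, lr.
    + intros x [Fa Fl] r [<-|lr]; auto.
    + apply finite_indexI; [apply fiFam; simpl; auto|].
      apply IH. intros r lr. apply fiFam. simpl; auto.
Qed.

Definition core F : G -> Prop := fun x => forall g, F (gmul (ginv g) (gmul x g)).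

Lemma core_normal F : subgroup F -> normal (core F).
Proof.
  intros subF. split; [split; [|split]|].
  - intros g. exact (group1 (subgroup_conj g subF)).
  - intros x y Fx Fy g. exact (groupM (subgroup_conj g subF) (Fx g) (Fy g)).
  - intros x Fx g. exact (groupV (subgroup_conj g subF) (Fx g)).
  - intros g x Fx g'.
    replace (gmul (ginv g') (gmul (gmul (ginv g) (gmul x g)) g'))
      with (gmul (ginv (gmul g g')) (gmul x (gmul g g'))) by (gsimpl; reflexivity).
    apply Fx.
Qed.

Lemma core_sub F x : core F x -> F x.
Proof. intros Fx. specialize (Fx gone). rewrite invg1, gmul1l, gmul1r in Fx. exact Fx. Qed.

Lemma sub_core F N : normal N -> (forall x, N x -> F x) -> forall x, N x -> core F x.
Proof. intros [_ conjN] NF x Nx g. apply NF, conjN, Nx. Qed.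

(* Every conjugate g^-1 F g is r^-1 F r for the representative r of the coset g F^-1,
   so the core is a finite intersection of finite-index subgroups. *)
Lemma finite_index_core F : finite_index F -> finite_index (core F).
Proof.
  intros fiF. pose proof fiF as [subF [R cover]].
  apply (finite_index_sup (fun x => forall r, In r R -> F (gmul (ginv r) (gmul x r)))).
  - exact (proj1 (core_normal F subF)).
  - intros x Fx g. destruct (cover g) as [r [Rr Fr]].
    replace (gmul (ginv g) (gmul x g))
      with (gmul (ginv (gmul (ginv r) g)) (gmul (gmul (ginv r) (gmul x r)) (gmul (ginv r) g)))
      by (gsimpl; reflexivity).
    exact (groupM subF (groupV subF Fr) (groupM subF (Fx r Rr) Fr)).
  - apply finite_index_bigcap. intros r _. exact (finite_index_conj F r fiF).
Qed.

Lemma central_sub_normal K S :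
  central K -> subgroup S -> (forall x, S x -> K x) -> normal S.
Proof.
  intros [_ commK] subS SK. split; [exact subS|].
  intros g x Sx. rewrite (commK x g (SK x Sx)), mulKg. exact Sx.
Qed.

End FiniteIndex.

Section ERFSeparation.
Context {B : Grp}.
Hypothesis ERF_B : ERF B.
Implicit Types (b : B) (S T : B -> Prop).

Lemma ERF_separates S b :
  subgroup S -> ~ S b -> exists F, finite_index F /\ (forall s, S s -> F s) /\ ~ F b.
Proof.
  intros subS Sb. apply NNPP. intros no_F. apply Sb, (ERF_B S subS).
  intros F fiF SF. apply NNPP. intros Fb. apply no_F. exists F. auto.
Qed.

Lemma ERF_separates_list S (L : list B) :
  subgroup S ->
  exists F, finite_index F /\ (forall s, S s -> F s) /\ (forall k, In k L -> ~ S k -> ~ F k).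
Proof.
  intros subS. induction L as [|a L [F [fiF [SF FL]]]].
  - exists (fun _ => True). split; [exact finite_indexT|]. split; [auto|]. intros k [].
  - destruct (classic (S a)) as [Sa|Sa].
    + exists F. split; [exact fiF|]. split; [exact SF|].
      intros k [<-|Lk]; [contradiction|exact (FL k Lk)].
    + destruct (ERF_separates S a subS Sa) as [Fa [fiFa [SFa Fa_a]]].
      exists (fun x => F x /\ Fa x). split; [exact (finite_indexI F Fa fiF fiFa)|].
      split; [auto|]. intros k [<-|Lk] Sk [Fk Fak]; [contradiction|exact (FL k Lk Sk Fk)].
Qed.

(* Separate from F the representatives of the cosets of S in T that lie outside S: then
   y = k (k^-1 y) in F /\ T with k^-1 y in S forces k into F, hence into S. *)
Lemma ERF_finite_index_trace S T (L : list B) :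
  subgroup S -> (forall y, T y -> exists k, In k L /\ S (gmul (ginv k) y)) ->
  exists F, finite_index F /\ (forall s, S s -> F s) /\ (forall y, T y -> F y -> S y).
Proof.
  intros subS cover. destruct (ERF_separates_list S L subS) as [F [fiF [SF FL]]].
  exists F. split; [exact fiF|]. split; [exact SF|].
  intros y Ty Fy. destruct (cover y Ty) as [k [Lk Sky]].
  replace y with (gmul k (gmul (ginv k) y)) by apply mulKVg.
  destruct (classic (S k)) as [Sk|Sk]; [exact (groupM subS Sk Sky)|].
  exfalso. apply (FL k Lk Sk).
  replace k with (gmul y (ginv (gmul (ginv k) y))) by (gsimpl; reflexivity).
  exact (groupM (proj1 fiF) Fy (groupV (proj1 fiF) (SF _ Sky))).
Qed.

End ERFSeparation.

Definition image_cap {A B : Grp} (phi : A -> B) (H M : A -> Prop) : B -> Prop :=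
  fun y => exists h, H h /\ M h /\ phi h = y.

Section Isomorphism.
Context {A B : Grp} (H : A -> Prop) (K : B -> Prop) (phi : A -> B).
Hypothesis subH : subgroup H.
Hypothesis iso : group_iso_on H K phi.

Lemma iso1 : phi gone = gone.
Proof.
  destruct iso as [_ [morph _]]. symmetry. apply (mulgI (phi gone)).
  rewrite <- morph, !gmul1r; [reflexivity | exact (group1 subH) ..].
Qed.

Lemma isoV h : H h -> phi (ginv h) = ginv (phi h).
Proof.
  intros Hh. destruct iso as [_ [morph _]]. symmetry. apply invg_uniq.
  rewrite <- morph, gmulVr; [exact iso1 | exact Hh | exact (groupV subH Hh)].
Qed.

Lemma image_cap_sub M y : image_cap phi H M y -> K y.
Proof. intros [h [Hh [_ <-]]]. exact (proj1 iso h Hh). Qed.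

Lemma image_capP M h : H h -> image_cap phi H M (phi h) <-> M h.
Proof.
  intros Hh. split.
  - intros [h' [Hh' [Mh' E]]]. rewrite <- (proj1 (proj2 (proj2 iso)) h' h Hh' Hh E). exact Mh'.
  - intros Mh. exists h. auto.
Qed.

Lemma subgroup_image_cap M : subgroup M -> subgroup (image_cap phi H M).
Proof.
  intros subM. destruct iso as [_ [morph _]]. split; [|split].
  - exists gone. split; [exact (group1 subH)|]. split; [exact (group1 subM)|exact iso1].
  - intros x y [h [Hh [Mh <-]]] [h' [Hh' [Mh' <-]]]. exists (gmul h h').
    split; [exact (groupM subH Hh Hh')|]. split; [exact (groupM subM Mh Mh')|auto].
  - intros x [h [Hh [Mh <-]]]. exists (ginv h).
    split; [exact (groupV subH Hh)|]. split; [exact (groupV subM Mh)|exact (isoV h Hh)].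
Qed.

Lemma image_cap_cosets M :
  finite_index M ->
  exists L, forall y, K y -> exists k, In k L /\ image_cap phi H M (gmul (ginv k) y).
Proof.
  intros [subM [R cover]]. destruct iso as [_ [morph [_ onto]]].
  destruct (list_witnesses (fun r h => H h /\ M (gmul (ginv r) h)) R) as [L HL].
  exists (map phi L). intros y Ky.
  destruct (onto y Ky) as [h [Hh <-]]. destruct (cover h) as [r [Rr Mrh]].
  destruct (HL r Rr) as [h' [Lh' [Hh' Mrh']]]; [eauto|].
  exists (phi h'). split; [exact (in_map phi _ _ Lh')|].
  exists (gmul (ginv h') h). split; [exact (groupM subH (groupV subH Hh') Hh)|].
  split; [exact (group_leftdiv subM Mrh' Mrh)|].
  rewrite morph, isoV; auto. exact (groupV subH Hh').
Qed.

Lemma compatible_of_trace {Lam : Type} (NA : Lam -> A -> Prop) (NB : Lam -> B -> Prop) :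
  (forall l, subgroup (NA l)) -> (forall l, subgroup (NB l)) ->
  (forall l y, K y -> NB l y <-> image_cap phi H (NA l) y) ->
  compatible H K phi NA NB.
Proof.
  intros subNA subNB trace l. destruct iso as [memK [morph [_ onto]]].
  assert (cosets : forall h h', H h -> H h' ->
            same_set (lcoset (phi h) (NB l)) (lcoset (phi h') (NB l)) <->
            same_set (lcoset h (NA l)) (lcoset h' (NA l))).
  { intros h h' Hh Hh'. rewrite !lcoset_eqP by auto.
    assert (Hhh' : H (gmul (ginv h) h')) by exact (groupM subH (groupV subH Hh) Hh').
    rewrite <- (isoV h Hh), <- (morph _ _ (groupV subH Hh) Hh'), trace, image_capP;
      [reflexivity | exact Hhh' | exact (memK _ Hhh')]. }
  split; [|split; [|split]].
  - intros h h' Hh Hh'. apply cosets; auto.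
  - intros h h' Hh Hh' x. rewrite morph by auto. reflexivity.
  - intros h h' Hh Hh'. apply cosets; auto.
  - intros y [k [n [Kk [Nn ->]]]]. destruct (onto k Kk) as [h [Hh <-]].
    exists h. split; [exact Hh|]. apply lcoset_eqP; [auto|].
    rewrite invMg, <- gmulA, gmulVl, gmul1r. exact (groupV (subNB l) Nn).
Qed.

End Isomorphism.

Section Filtrations.
Context {G : Grp}.
Implicit Types (x : G) (H : G -> Prop).

Definition extendT {Lam : Type} (N : Lam -> G -> Prop) (o : option Lam) : G -> Prop :=
  match o with Some l => N l | None => fun _ => True end.

Lemma H_filtration_extendT H {Lam : Type} (N : Lam -> G -> Prop) :
  H_filtration H N -> H_filtration H (extendT N).
Proof.
  intros [[normN trivN] closedN]. split; [split|].
  - intros [l|]; [exact (normN l)|].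
    split; [split; [exact subgroupT | auto] | exact finite_indexT].
  - intros x Nx. apply trivN. intros l. exact (Nx (Some l)).
  - intros x. split.
    + intros HNx. apply closedN. intros l. exact (HNx (Some l)).
    + intros Hx [l|]; [exact (proj2 (closedN x) Hx l)|].
      exists x, gone. rewrite gmul1r. repeat split. exact Hx.
Qed.

Lemma H_filtration_reindex H {Lam Lam' : Type} (N : Lam -> G -> Prop) (f : Lam' -> Lam) :
  (forall l, exists l', f l' = l) -> H_filtration H N -> H_filtration H (fun l' => N (f l')).
Proof.
  intros onto [[normN trivN] closedN]. split; [split|].
  - intros l'. exact (normN (f l')).
  - intros x Nx. apply trivN. intros l. destruct (onto l) as [l' <-]. exact (Nx l').
  - intros x. split.
    + intros HNx. apply closedN. intros l. destruct (onto l) as [l' <-]. exact (HNx l').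
    + intros Hx l'. exact (proj2 (closedN x) Hx (f l')).
Qed.

Lemma H_filtration_of_separation H {Lam : Type} (N : Lam -> G -> Prop) :
  subgroup H -> (forall l, normal (N l) /\ finite_index (N l)) ->
  (forall x, ~ H x -> exists l, ~ prodset H (N l) x) ->
  (forall x, H x -> x <> gone -> exists l, ~ N l x) ->
  H_filtration H N.
Proof.
  intros subH normN sepH sepN.
  assert (HN : forall x l, N l x -> prodset H (N l) x).
  { intros x l Nx. exists gone, x. rewrite gmul1l. split; [exact (group1 subH) | auto]. }
  split; [split; [exact normN|]|].
  - intros x Nx. apply NNPP. intros x1. destruct (classic (H x)) as [Hx|Hx].
    + destruct (sepN x Hx x1) as [l Nlx]. exact (Nlx (Nx l)).
    + destruct (sepH x Hx) as [l HNlx]. exact (HNlx (HN x l (Nx l))).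
  - intros x. split.
    + intros HNx. apply NNPP. intros Hx. destruct (sepH x Hx) as [l HNlx]. exact (HNlx (HNx l)).
    + intros Hx l. exists x, gone. rewrite gmul1r. split; [exact Hx|].
      split; [exact (group1 (proj1 (proj1 (normN l)))) | reflexivity].
Qed.

End Filtrations.

Section Lifting.
Context {A B : Grp} (H : A -> Prop) (K : B -> Prop) (phi : A -> B).
Hypothesis subH : subgroup H.
Hypothesis iso : group_iso_on H K phi.
Hypothesis centK : central K.
Hypothesis ERF_B : ERF B.

Definition lift_of (M : A -> Prop) (b : B) (N : B -> Prop) : Prop :=
  normal N /\ finite_index N /\ (forall y, K y -> N y <-> image_cap phi H M y) /\
  (~ K b -> ~ prodset K N b).

Lemma exists_lift M b : normal M -> finite_index M -> exists N, lift_of M b N.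
Proof.
  intros [subM _] fiM.
  pose proof (subgroup_image_cap H K phi subH iso M subM) as subS.
  pose proof (central_sub_normal K _ centK subS (image_cap_sub H K phi iso M)) as normS.
  destruct (image_cap_cosets H K phi subH iso M fiM) as [L cover].
  destruct (ERF_finite_index_trace ERF_B _ K L subS cover) as [F1 [fiF1 [SF1 F1K]]].
  assert (F2_avoids_b : exists F2, finite_index F2 /\ (forall k, K k -> F2 k) /\ (~ K b -> ~ F2 b)).
  { destruct (classic (K b)) as [Kb|Kb].
    - exists (fun _ => True). split; [exact finite_indexT | auto].
    - destruct (ERF_separates ERF_B K b (proj1 centK) Kb) as [F2 [? [? ?]]]. exists F2. auto. }
  destruct F2_avoids_b as [F2 [fiF2 [KF2 F2b]]].
  pose proof (finite_indexI F1 F2 fiF1 fiF2) as fiF.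
  exists (core (fun x => F1 x /\ F2 x)).
  split; [exact (core_normal _ (proj1 fiF))|].
  split; [exact (finite_index_core _ fiF)|].
  split.
  - intros y Ky. split.
    + intros coreFy. exact (F1K y Ky (proj1 (core_sub _ y coreFy))).
    + apply (sub_core _ _ normS). intros x Sx.
      exact (conj (SF1 x Sx) (KF2 x (image_cap_sub H K phi iso M x Sx))).
  - intros Kb [k [n [Kk [Nn ->]]]]. apply F2b; [exact Kb|].
    exact (groupM (proj1 fiF2) (KF2 k Kk) (proj2 (core_sub _ n Nn))).
Qed.

Context {I : Type} (M : I -> A -> Prop).
Hypothesis normM : forall i, normal (M i) /\ finite_index (M i).

Record lift := Lift {
  lift_idx : I;
  lift_pt : B;
  lift_sub : B -> Prop;
  liftP : lift_of (M lift_idx) lift_pt lift_sub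
}.

Lemma exists_lift_at i b : exists p : lift, lift_idx p = i /\ lift_pt p = b.
Proof.
  destruct (normM i) as [normMi fiMi]. destruct (exists_lift (M i) b normMi fiMi) as [N liftN].
  exists (Lift i b N liftN). split; reflexivity.
Qed.

Lemma H_filtration_lift : H_filtration H M -> H_filtration H (fun p => M (lift_idx p)).
Proof.
  apply H_filtration_reindex. intros i.
  destruct (exists_lift_at i gone) as [p [<- _]]. exists p. reflexivity.
Qed.

Lemma K_filtration_lift (i0 : I) : H_filtration H M -> H_filtration K lift_sub.
Proof.
  intros [[_ trivM] _]. destruct iso as [_ [_ [_ onto]]].
  apply H_filtration_of_separation; [exact (proj1 centK) | | |].
  - intros p. destruct (liftP p) as [normN [fiN _]]. split; assumption.
  - intros x Kx. destruct (exists_lift_at i0 x) as [p [_ <-]].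
    exists p. exact (proj2 (proj2 (proj2 (liftP p))) Kx).
  - intros x Kx x1. destruct (onto x Kx) as [h [Hh <-]].
    assert (Mh : exists i, ~ M i h).
    { apply NNPP. intros all_Mh. apply x1. rewrite (trivM h); [exact (iso1 H K phi subH iso)|].
      intros i. apply NNPP. intros Mih. apply all_Mh. exists i. exact Mih. }
    destruct Mh as [i Mih]. destruct (exists_lift_at i (phi h)) as [p [<- _]].
    exists p. intros Np. apply Mih.
    destruct (liftP p) as [_ [_ [trace _]]].
    apply (image_capP H K phi iso _ h Hh), trace; assumption.
Qed.

Lemma compatible_lift : compatible H K phi (fun p => M (lift_idx p)) lift_sub.
Proof.
  apply (compatible_of_trace H K phi subH iso).
  - intros p. exact (proj1 (proj1 (normM (lift_idx p)))).
  - intros p. exact (proj1 (proj1 (liftP p))).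
  - intros p. exact (proj1 (proj2 (proj2 (liftP p)))).
Qed.

End Lifting.

Theorem theorem3p7 (A : Grp) (H : A -> Prop) (B : Grp) (K : B -> Prop) (phi : A -> B) :
  subgroup H ->
  (exists (Lam0 : Type) (N0 : Lam0 -> A -> Prop), H_filtration H N0) ->
  ERF B ->
  central K ->
  group_iso_on H K phi ->
  exists (Lam : Type) (NA : Lam -> A -> Prop) (NB : Lam -> B -> Prop),
    H_filtration H NA /\ H_filtration K NB /\ compatible H K phi NA NB.
Proof.
  intros subH [Lam0 [N0 filtN0]] ERF_B centK iso.
  (* Adjoining A itself keeps the index type of the lifts inhabited even when Lam0 is empty. *)
  pose proof (H_filtration_extendT H N0 filtN0) as filtM.
  pose proof (proj1 (proj1 filtM)) as normM.
  exists (lift H K phi (extendT N0)), (fun p => extendT N0 (lift_idx H K phi _ p)),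
    (lift_sub H K phi _).
  split; [|split].
  - exact (H_filtration_lift H K phi subH iso centK ERF_B _ normM filtM).
  - exact (K_filtration_lift H K phi subH iso centK ERF_B _ normM None filtM).
  - exact (compatible_lift H K phi subH iso _ normM).
Qed.
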